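(* Let $\lambda\in[1,\infty)$ and $\epsilon>0$. Then for all $u_0\in H^\epsilon(\mathbb{T}_\lambda)$, $$\|e^{it\partial_x^2}u_0\|_{L^6_{tx}(\mathbb{T}_{\lambda^2}\times\mathbb{T}_\lambda)}\lesssim_\epsilon\lambda^\epsilon\|u_0\|_{H^\epsilon(\mathbb{T}_\lambda)},$$ with implicit constant independent of $\lambda$.
   Context: $\mathbb{T}_\lambda=\mathbb{R}/2\pi\lambda\mathbb{Z}$. For $f$ on $\mathbb{T}_\lambda$, $\mathcal F^\lambda f(q)=\int_{-\pi\lambda}^{\pi\lambda}e^{-ixq}f(x)dx$, $q\in\mathbb{Z}/\lambda$, and $e^{it\partial_x^2}$ is the Fourier multiplier $e^{-itq^2}$; it is $2\pi\lambda^2$-periodic in $t$. $\|f\|^2_{H^\epsilon(\mathbb{T}_\lambda)}=\frac{1}{2\pi\lambda}\sum_{q\in\mathbb{Z}/\lambda}\langle q\rangle^{2\epsilon}|\mathcal F^\lambda f(q)|^2$. *)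

From Stdlib Require Import Reals ZArith.
From Coquelicot Require Import Coquelicot.
Open Scope R_scope.

(* Fourier data of u0 on T_lam = R / 2 pi lam Z is indexed by k : Z,
   frequency q = k / lam; c k := F^lam u0 (k / lam). *)
Definition freq (lam : R) (k : Z) : R := IZR k / lam.

Definition eix (th : R) : C := (cos th, sin th).

Definition phase (lam t x : R) (k : Z) : R :=
  freq lam k * x - (freq lam k) ^ 2 * t.

(* Truncation to |k| <= N of
   e^{it d_x^2} u0 (x) = 1/(2 pi lam) sum_{q in Z/lam} e^{i x q - i t q^2} F u0 (q). *)
Definition lin_sol_trunc (lam : R) (c : Z -> C) (N : nat) (t x : R) : C :=
  Cmult (RtoC (/ (2 * PI * lam)))
    (sum_n (fun n : nat =>
       let k := (Z.of_nat n - Z.of_nat N)%Z in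
       Cmult (c k) (eix (phase lam t x k))) (2 * N)%nat).

Definition japan (q : R) : R := sqrt (1 + q ^ 2).

Definition hs_term (eps lam : R) (c : Z -> C) (k : Z) : R :=
  Rpower (japan (freq lam k)) (2 * eps) * (Cmod (c k)) ^ 2.

(* sum over k in Z split into k = n >= 0 and k = -(n+1) < 0 *)
Definition hs_pos (eps lam : R) (c : Z -> C) (n : nat) : R :=
  hs_term eps lam c (Z.of_nat n).
Definition hs_neg (eps lam : R) (c : Z -> C) (n : nat) : R :=
  hs_term eps lam c (- Z.of_nat (S n))%Z.

Definition in_Hs (eps lam : R) (c : Z -> C) : Prop :=
  ex_series (hs_pos eps lam c) /\ ex_series (hs_neg eps lam c).

Definition Hs_norm (eps lam : R) (c : Z -> C) : R :=
  sqrt (/ (2 * PI * lam) *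
        (Series (hs_pos eps lam c) + Series (hs_neg eps lam c))).

(* nonnegative sixth root (Rpower 0 y = 1 in Stdlib, so guard 0) *)
Definition root6 (a : R) : R :=
  if Rle_dec a 0 then 0 else Rpower a (/ 6).

(* ||u||_{L^6_{tx}(T_{lam^2} x T_lam)} with Lebesgue (= Riemann, the
   integrand being continuous) measure on the fundamental domains
   [0, 2 pi lam^2] x [0, 2 pi lam]. *)
Definition L6_norm (lam : R) (u : R -> R -> C) : R :=
  root6 (RInt (fun t => RInt (fun x => (Cmod (u t x)) ^ 6) 0 (2 * PI * lam))
              0 (2 * PI * lam ^ 2)).

(* Since [|u|^6 = |u^3|^2] and [u^3] is a sum over triples [k = (k1, k2, k3)]
   of modes carrying the character
   [e^{i ((k1 + k2 + k3) x / lam - (k1^2 + k2^2 + k3^2) t / lam^2)}],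
   integrating over [T_{lam^2} x T_lam] keeps only the pairs of resonant
   triples, those with the same [k1 + k2 + k3] and [k1^2 + k2^2 + k3^2].
   A Schur test with the weight [w k = <k1>^{2 eps} <k2>^{2 eps} <k3>^{2 eps}]
   bounds this by [sup_k sum_{k' ~ k} 1 / w k'] times
   [(sum_k <k>^{2 eps} |c k|^2)^3], and the latter is at most
   [(lam^{2 eps} 2 pi lam ||u0||^2)^3] since [<k> <= lam <k / lam>].
   The triples resonant with [k] share
   [M = 6 (k1^2 + k2^2 + k3^2) - 2 (k1 + k2 + k3)^2 = 3 (k1 - k2)^2 + (k1 + k2 - 2 k3)^2],
   so [w k' >= 8^{-eps} (1 + M)^eps], and each is determined by the
   representation [(k1 - k2, k1 + k2 - 2 k3)] of [M] by [3 a^2 + b^2].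
   There are at most [14 d(M)^3] such representations, and
   [d(M) = O(M^{eps / 3})] by the divisor bound, so the supremum is bounded
   independently of [N] and [lam]. *)

From Stdlib Require Import Reals ZArith Znumtheory List Permutation Lia Lra.
From Coquelicot Require Import Coquelicot.
Import ListNotations.
Open Scope R_scope.

Section Counting.

Context {A B : Type}.

Lemma NoDup_list_prod (l : list A) (l' : list B) :
  NoDup l -> NoDup l' -> NoDup (list_prod l l').
Proof.
  induction 1 as [|a l Ha Hl IH]; intros Hl'; simpl; [constructor|].
  apply NoDup_app; auto.
  - apply NoDup_map_NoDup_ForallPairs; [|exact Hl'].
    intros x y _ _ H; now inversion H.
  - intros [x y] H1 H2. apply in_map_iff in H1 as [z [Hz _]].
    inversion Hz; subst. apply in_prod_iff in H2. tauto.
Qed.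

Lemma length_le_of_injective_in (l : list A) (l' : list B) (F : A -> B) :
  NoDup l -> (forall x y, In x l -> In y l -> F x = F y -> x = y) ->
  (forall x, In x l -> In (F x) l') -> (length l <= length l')%nat.
Proof.
  intros Hl Hinj Hin. rewrite <- (length_map F l).
  apply NoDup_incl_length.
  - apply NoDup_map_NoDup_ForallPairs; [|exact Hl].
    intros x y Hx Hy; apply Hinj; auto.
  - intros y Hy; apply in_map_iff in Hy as [x [<- Hx]]; auto.
Qed.

Variable eq_dec : forall x y : B, {x = y} + {x <> y}.

Definition fiber (F : A -> B) (l : list A) (b : B) : list A :=
  filter (fun x => if eq_dec (F x) b then true else false) l.

Lemma In_fiber F l b x : In x (fiber F l b) <-> In x l /\ F x = b.
Proof.
  unfold fiber; rewrite filter_In.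
  destruct (eq_dec (F x) b); intuition discriminate.
Qed.

Lemma length_le_mul_of_fibers (l : list A) (l' : list B) (F : A -> B) (k : nat) :
  (forall x, In x l -> In (F x) l') ->
  (forall x0, In x0 l -> (length (fiber F l (F x0)) <= k)%nat) ->
  (length l <= k * length l')%nat.
Proof.
  intros Hin Hk.
  assert (Hb : forall b, (length (fiber F l b) <= k)%nat).
  { intros b. destruct (fiber F l b) as [|x0 r] eqn:E; [simpl; lia|].
    assert (Hx0 : In x0 (fiber F l b)) by (rewrite E; now left).
    apply In_fiber in Hx0 as [Hx0 <-]. rewrite <- E. now apply Hk. }
  clear Hk. revert l Hin Hb. induction l' as [|b l' IH]; intros l Hin Hb.
  - destruct l as [|x l]; [simpl; lia|]. destruct (Hin x (or_introl eq_refl)).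
  - rewrite <- (filter_length (fun x => if eq_dec (F x) b then true else false) l).
    set (rest := filter (fun x => negb (if eq_dec (F x) b then true else false)) l).
    assert (Hrest : (length rest <= k * length l')%nat).
    { apply IH.
      - intros x Hx. apply filter_In in Hx as [Hx Hnb].
        destruct (eq_dec (F x) b); [discriminate|].
        destruct (Hin x Hx); [congruence|assumption].
      - intros b'. eapply Nat.le_trans; [|apply (Hb b')]. unfold fiber, rest.
        clear. induction l as [|x l IH]; simpl; [lia|].
        destruct (eq_dec (F x) b); simpl; destruct (eq_dec (F x) b'); simpl; lia. }
    specialize (Hb b). unfold fiber in Hb. simpl. lia.
Qed.

End Counting.

Section Divisors.

Local Open Scope Z_scope.

Definition Zrange (lo : Z) (n : nat) : list Z := map (fun i => lo + Z.of_nat i) (seq 0 n).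

Lemma In_Zrange lo n x : In x (Zrange lo n) <-> lo <= x < lo + Z.of_nat n.
Proof.
  unfold Zrange; rewrite in_map_iff; split.
  - intros [i [<- Hi]]. apply in_seq in Hi. lia.
  - intros H. exists (Z.to_nat (x - lo)). split; [lia|]. apply in_seq; lia.
Qed.

Lemma NoDup_Zrange lo n : NoDup (Zrange lo n).
Proof.
  apply NoDup_map_NoDup_ForallPairs; [|apply seq_NoDup].
  intros x y _ _ H; lia.
Qed.

Definition divisors (M : Z) : list Z :=
  filter (fun d => M mod d =? 0) (Zrange 1 (Z.to_nat M)).

Definition ndiv (M : Z) : nat := length (divisors M).

Lemma In_divisors M d : 1 <= M -> In d (divisors M) <-> 1 <= d /\ (d | M).
Proof.
  intros HM; unfold divisors; rewrite filter_In, In_Zrange, Z.eqb_eq; split.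
  - intros [H1 H2]; split; [lia|]. apply Z.mod_divide; auto; lia.
  - intros [H1 H2]; split.
    + pose proof (Z.divide_pos_le d M ltac:(lia) H2); lia.
    + apply Z.mod_divide; auto; lia.
Qed.

Lemma NoDup_divisors M : NoDup (divisors M).
Proof. apply NoDup_filter, NoDup_Zrange. Qed.

Lemma gcd_pos_r x a : 1 <= a -> 1 <= Z.gcd x a.
Proof.
  intros Ha. pose proof (Z.gcd_nonneg x a).
  destruct (Z.eq_dec (Z.gcd x a) 0) as [E|E]; [|lia].
  apply Z.gcd_eq_0 in E; lia.
Qed.

Lemma ndiv_le_of_divide a b : 1 <= b -> (a | b) -> (ndiv a <= ndiv b)%nat.
Proof.
  intros Hb Hab. destruct (Z_le_gt_dec 1 a) as [Ha|Ha].
  - apply (length_le_of_injective_in _ _ (fun x => x)); auto using NoDup_divisors.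
    intros x Hx. rewrite In_divisors in *; auto.
    destruct Hx; split; eauto using Z.divide_trans.
  - unfold ndiv, divisors. replace (Z.to_nat a) with 0%nat by lia. simpl; lia.
Qed.

(* A divisor [x] of [a b] is recovered from the pair [(gcd x a, x / gcd x a)]. *)
Lemma ndiv_mul_le a b : 1 <= a -> 1 <= b -> (ndiv (a * b) <= ndiv a * ndiv b)%nat.
Proof.
  intros Ha Hb. unfold ndiv. rewrite <- length_prod.
  apply (length_le_of_injective_in _ _ (fun x => (Z.gcd x a, x / Z.gcd x a)));
    auto using NoDup_divisors.
  - intros x y _ _ H. injection H as H1 H2.
    pose proof (gcd_pos_r x a Ha). pose proof (gcd_pos_r y a Ha).
    rewrite (Zdivide_Zdiv_eq (Z.gcd x a) x), (Zdivide_Zdiv_eq (Z.gcd y a) y)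
      by (lia || apply Z.gcd_divide_l).
    congruence.
  - intros x Hx. apply In_divisors in Hx as [Hx1 Hx2]; [|nia].
    pose proof (gcd_pos_r x a Ha) as Hg.
    set (g := Z.gcd x a) in *.
    apply in_prod; apply In_divisors; auto.
    + split; [lia|]. apply Z.gcd_divide_r.
    + assert (Ex : x = g * (x / g)) by (apply Zdivide_Zdiv_eq; [lia|apply Z.gcd_divide_l]).
      assert (Ea : a = g * (a / g)) by (apply Zdivide_Zdiv_eq; [lia|apply Z.gcd_divide_r]).
      split; [nia|].
      apply Z.gauss with (a / g).
      * rewrite Ex, Ea, <- Z.mul_assoc in Hx2.
        apply Z.mul_divide_cancel_l in Hx2; auto; lia.
      * apply Z.gcd_div_gcd; [lia|reflexivity].
Qed.

Definition rough (P M : Z) : Prop := forall q, 2 <= q -> (q | M) -> P <= q.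

Lemma divide_prime_pow p : 2 <= p -> rough p p ->
  forall (e : nat) x, 1 <= x -> (x | p ^ Z.of_nat e) ->
  exists i, (i <= e)%nat /\ x = p ^ Z.of_nat i.
Proof.
  intros Hp Hprime e. induction e as [|e IH]; intros x Hx Hd.
  - exists 0%nat; split; [lia|]. apply Z.divide_pos_le in Hd; simpl in *; lia.
  - rewrite Nat2Z.inj_succ, Z.pow_succ_r in Hd by lia.
    destruct (Z.eq_dec (Z.gcd x p) 1) as [E|E].
    + apply Z.gauss in Hd; auto.
      destruct (IH x Hx Hd) as [i [Hi ->]]. exists i; split; auto.
    + assert (Hxp : (p | x)).
      { replace p with (Z.gcd x p); [apply Z.gcd_divide_l|].
        pose proof (gcd_pos_r x p ltac:(lia)).
        pose proof (Z.divide_pos_le (Z.gcd x p) p ltac:(lia) (Z.gcd_divide_r x p)).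
        specialize (Hprime (Z.gcd x p) ltac:(lia) (Z.gcd_divide_r x p)). lia. }
      destruct Hxp as [x' ->].
      rewrite (Z.mul_comm x' p) in Hd. apply Z.mul_divide_cancel_l in Hd; [|lia].
      destruct (IH x' ltac:(nia) Hd) as [i [Hi ->]]. exists (S i); split; [lia|].
      rewrite Nat2Z.inj_succ, Z.pow_succ_r by lia. ring.
Qed.

Lemma ndiv_prime_pow_le p (e : nat) : 2 <= p -> rough p p ->
  (ndiv (p ^ Z.of_nat e) <= S e)%nat.
Proof.
  intros Hp Hprime.
  rewrite <- (length_seq (S e) 0), <- (length_map (fun i => p ^ Z.of_nat i)).
  apply (length_le_of_injective_in _ _ (fun x => x)); auto using NoDup_divisors.
  assert (Hpe : 0 < p ^ Z.of_nat e) by (apply Z.pow_pos_nonneg; lia).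
  intros x Hx. apply In_divisors in Hx as [H1 H2]; [|lia].
  destruct (divide_prime_pow p Hp Hprime e x H1 H2) as [i [Hi ->]].
  apply in_map_iff; exists i; split; [reflexivity|apply in_seq; lia].
Qed.

Lemma factor_out_pow p M : 2 <= p -> 1 <= M ->
  exists (e : nat) m, 1 <= m /\ M = p ^ Z.of_nat e * m /\ ~ (p | m).
Proof.
  intros Hp HM.
  induction M as [x IH] using (well_founded_ind (Z.lt_wf 0)).
  destruct (Zdivide_dec p x) as [[x' ->]|Hnd].
  - destruct (IH x' ltac:(nia) ltac:(nia)) as [e [m [Hm [E Hnd]]]].
    exists (S e), m; repeat split; auto.
    rewrite Nat2Z.inj_succ, Z.pow_succ_r, E by lia. ring.
  - exists 0%nat, x; repeat split; auto. rewrite Z.mul_1_l; reflexivity.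
Qed.

End Divisors.

Lemma Rpower_pos x y : 0 < Rpower x y.
Proof. apply exp_pos. Qed.

Lemma Rpower_1_l y : Rpower 1 y = 1.
Proof. unfold Rpower; rewrite ln_1, Rmult_0_r; apply exp_0. Qed.

Lemma Rpower_IZR_pow (p : Z) (e : nat) d : (0 < p)%Z ->
  Rpower (IZR (p ^ Z.of_nat e)) d = Rpower (IZR p) (INR e * d).
Proof.
  intros Hp. rewrite <- pow_IZR, <- Rpower_pow, Rpower_mult; auto.
  apply IZR_lt; auto.
Qed.

Lemma succ_le_Rpower (d K p : R) (e : nat) : 0 < d -> 1 < p -> 1 <= K ->
  1 <= K * (d * ln p) -> INR e + 1 <= K * Rpower p (INR e * d).
Proof.
  intros Hd Hp HK HKd.
  assert (Hexp : 1 + INR e * d * ln p <= Rpower p (INR e * d)) by apply exp_ineq1_le.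
  pose proof (pos_INR e).
  assert (INR e <= INR e * (K * (d * ln p))) by nra.
  nra.
Qed.

Lemma ndiv_pow_mul_le P m (e : nat) : (2 <= P)%Z -> (1 <= m)%Z ->
  rough P (P ^ Z.of_nat e * m) -> (ndiv (P ^ Z.of_nat e * m) <= S e * ndiv m)%nat.
Proof.
  intros HP Hm Hrough.
  assert (HPe : (0 < P ^ Z.of_nat e)%Z) by (apply Z.pow_pos_nonneg; lia).
  eapply Nat.le_trans; [apply ndiv_mul_le; lia|]. apply Nat.mul_le_mono_r.
  destruct e as [|e]; [cbv; lia|].
  apply ndiv_prime_pow_le; auto.
  intros q Hq HqP. apply Hrough; auto.
  apply Z.divide_mul_l. rewrite Nat2Z.inj_succ, Z.pow_succ_r by lia.
  apply Z.divide_mul_l; auto.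
Qed.

Section DivisorBound.

Variables (d K : R) (B : Z).
Hypothesis HK : 1 <= K.
Hypothesis Hsmall : forall (e : nat) p, (2 <= p)%Z -> INR e + 1 <= K * Rpower (IZR p) (INR e * d).
Hypothesis Hlarge : forall (e : nat) p, (B <= p)%Z -> INR e + 1 <= Rpower (IZR p) (INR e * d).

Lemma succ_mul_pow_K_le P (e : nat) : (2 <= P)%Z ->
  (INR e + 1) * K ^ Z.to_nat (B - (P + 1)) <= K ^ Z.to_nat (B - P) * Rpower (IZR P) (INR e * d).
Proof.
  intros HP. destruct (Z_lt_le_dec P B) as [HPB|HPB].
  - replace (Z.to_nat (B - P)) with (S (Z.to_nat (B - (P + 1)))) by lia.
    rewrite <- tech_pow_Rmult.
    pose proof (pow_le K (Z.to_nat (B - (P + 1))) ltac:(lra)).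
    pose proof (Hsmall e P HP). nra.
  - replace (Z.to_nat (B - P)) with 0%nat by lia.
    replace (Z.to_nat (B - (P + 1))) with 0%nat by lia.
    simpl. rewrite !Rmult_1_r, Rmult_1_l. apply Hlarge; auto.
Qed.

(* Peeling off the prime [P] costs a factor [K] only while [P < B]. *)
Lemma ndiv_le_rough P M : (2 <= P)%Z -> (1 <= M)%Z -> rough P M ->
  INR (ndiv M) <= K ^ Z.to_nat (B - P) * Rpower (IZR M) d.
Proof.
  enough (H : forall (n : nat) P M, (M - P < Z.of_nat n)%Z -> (2 <= P)%Z -> (1 <= M)%Z ->
            rough P M -> INR (ndiv M) <= K ^ Z.to_nat (B - P) * Rpower (IZR M) d).
  { intros HP HM. apply (H (Z.to_nat (M - P + 1))); lia. }
  clear P M. induction n as [|n IH]; intros P M Hn HP HM Hrough.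
  - assert (M = 1)%Z as ->.
    { destruct (Z.eq_dec M 1); auto. specialize (Hrough M ltac:(lia) (Z.divide_refl M)). lia. }
    change (ndiv 1) with 1%nat. rewrite Rpower_1_l, Rmult_1_r. apply pow_R1_Rle; auto.
  - destruct (factor_out_pow P M HP HM) as [e [m [Hm [-> Hnd]]]].
    assert (Hrough' : rough (P + 1) m).
    { intros q Hq Hqm. assert (P <= q)%Z by (apply Hrough; auto; apply Z.divide_mul_r; auto).
      destruct (Z.eq_dec P q) as [<-|]; [contradiction|lia]. }
    assert (HPe : (0 < P ^ Z.of_nat e)%Z) by (apply Z.pow_pos_nonneg; lia).
    specialize (IH (P + 1)%Z m ltac:(nia) ltac:(lia) Hm Hrough').
    pose proof (le_INR _ _ (ndiv_pow_mul_le P m e HP Hm Hrough)) as Hdiv.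
    rewrite mult_INR, S_INR in Hdiv.
    rewrite mult_IZR, <- Rpower_mult_distr, Rpower_IZR_pow by (try apply IZR_lt; lia).
    pose proof (pos_INR e). pose proof (Rpower_pos (IZR m) d).
    pose proof (succ_mul_pow_K_le P e HP).
    apply Rle_trans with ((INR e + 1) * (K ^ Z.to_nat (B - (P + 1)) * Rpower (IZR m) d)).
    { eapply Rle_trans; [exact Hdiv|]. apply Rmult_le_compat_l; lra. }
    rewrite <- Rmult_assoc, <- (Rmult_assoc (K ^ _)).
    apply Rmult_le_compat_r; lra.
Qed.

End DivisorBound.

Theorem ndiv_le_Rpower d : 0 < d -> exists C, 0 < C /\
  forall M, (1 <= M)%Z -> INR (ndiv M) <= C * Rpower (IZR M) d.
Proof.
  intros Hd.
  assert (Hln2 : 0 < ln 2) by (rewrite <- ln_1; apply ln_increasing; lra).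
  set (K := Rmax 1 (/ (d * ln 2))).
  set (B := up (exp (/ d))).
  assert (HK : 1 <= K) by apply Rmax_l.
  assert (HKd : 1 <= K * (d * ln 2)).
  { apply (Rmult_le_reg_r (/ (d * ln 2))); [apply Rinv_0_lt_compat; nra|].
    rewrite Rmult_assoc, Rinv_r, Rmult_1_l, Rmult_1_r by nra. apply Rmax_r. }
  exists (K ^ Z.to_nat (B - 2)). split; [apply pow_lt; lra|].
  intros M HM. apply ndiv_le_rough; auto; [| |lia|intros q Hq _; lia].
  - intros e p Hp. apply IZR_le in Hp. apply succ_le_Rpower; auto; try lra.
    assert (ln 2 <= ln (IZR p)) by (apply ln_le; lra). nra.
  - intros e p Hp. apply IZR_le in Hp.
    pose proof (archimed (exp (/ d))) as [HB _]. fold B in HB.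
    assert (Hexp : exp (/ d) < IZR p) by lra.
    assert (/ d < ln (IZR p)).
    { rewrite <- (ln_exp (/ d)). apply ln_increasing; auto using exp_pos. }
    rewrite <- (Rmult_1_l (Rpower _ _)). apply succ_le_Rpower; try lra.
    + pose proof (exp_pos (/ d)). assert (1 < exp (/ d)); [|lra].
      rewrite <- exp_0. apply exp_increasing, Rinv_0_lt_compat; auto.
    + rewrite Rmult_1_l. apply (Rmult_le_reg_l (/ d)); [apply Rinv_0_lt_compat; auto|].
      rewrite <- Rmult_assoc, Rinv_l, Rmult_1_r; lra.
Qed.

Section NormForm.

Local Open Scope Z_scope.

Definition norm3 (a b : Z) : Z := 3 * a ^ 2 + b ^ 2.

Lemma norm3_nonneg a b : 0 <= norm3 a b.
Proof. unfold norm3. nia. Qed.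

(* Multiplicativity of the norm [N(b + a sqrt(-3)) = norm3 a b] on [Z[sqrt(-3)]]. *)
Lemma norm3_mul a b a1 b1 :
  norm3 (b * a1 - b1 * a) (b * b1 + 3 * a * a1) = norm3 a b * norm3 a1 b1.
Proof. unfold norm3; ring. Qed.

Definition reps (M : Z) : list (Z * Z) :=
  let box := Zrange (- M) (Z.to_nat (2 * M + 1)) in
  filter (fun s => norm3 (fst s) (snd s) =? M) (list_prod box box).

Definition prim_reps (M : Z) : list (Z * Z) :=
  filter (fun s => Z.gcd (fst s) (snd s) =? 1) (reps M).

Lemma In_reps M a b : 0 <= M -> In (a, b) (reps M) <-> norm3 a b = M.
Proof.
  intros HM. unfold reps, norm3.
  rewrite filter_In, in_prod_iff, !In_Zrange, Z.eqb_eq. cbn [fst snd].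
  split; [tauto|]. intros H. rewrite !Z.pow_2_r in H.
  assert (a * a <= M) by nia. assert (b * b <= M) by nia.
  repeat split; auto; nia.
Qed.

Lemma NoDup_reps M : NoDup (reps M).
Proof. apply NoDup_filter, NoDup_list_prod; apply NoDup_Zrange. Qed.

Lemma In_prim_reps M a b : 0 <= M ->
  In (a, b) (prim_reps M) <-> norm3 a b = M /\ Z.gcd a b = 1.
Proof.
  intros HM. unfold prim_reps. rewrite filter_In, In_reps, Z.eqb_eq by auto. tauto.
Qed.

Lemma NoDup_prim_reps M : NoDup (prim_reps M).
Proof. apply NoDup_filter, NoDup_reps. Qed.

(* [(a, b)] is recovered from [(b + a sqrt(-3)) (b1 - a1 sqrt(-3))], whose
   coordinates [b a1 - b1 a] and [b b1 + 3 a a1] satisfy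
   [3 (b a1 - b1 a)^2 + (b b1 + 3 a a1)^2 = M^2]: given the first, only the
   sign of the second is left to choose. *)
Lemma rep_eq_of_cross_sign M a1 b1 a b a' b' : 1 <= M ->
  norm3 a1 b1 = M -> norm3 a b = M -> norm3 a' b' = M ->
  b * a1 - b1 * a = b' * a1 - b1 * a' ->
  (0 <=? b * b1 + 3 * a * a1) = (0 <=? b' * b1 + 3 * a' * a1) -> (a, b) = (a', b').
Proof.
  intros HM E1 E E' HD Hsign.
  pose proof (norm3_mul a b a1 b1) as I. pose proof (norm3_mul a' b' a1 b1) as I'.
  rewrite E, E1, HD in I. rewrite E', E1 in I'. unfold norm3 in I, I', E1.
  set (Y := b * b1 + 3 * a * a1) in *. set (Y' := b' * b1 + 3 * a' * a1) in *.
  assert (HY : Y = Y').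
  { assert (H0 : (Y - Y') * (Y + Y') = 0) by nia.
    apply Z.mul_eq_0 in H0.
    destruct (Z.leb_spec 0 Y), (Z.leb_spec 0 Y'); try discriminate; lia. }
  unfold Y, Y' in HY.
  assert (Ha : M * a = M * a').
  { rewrite <- E1.
    replace ((3 * a1 ^ 2 + b1 ^ 2) * a) with
      (a1 * (b * b1 + 3 * a * a1) - b1 * (b * a1 - b1 * a)) by ring.
    rewrite HD, HY. ring. }
  assert (Hb : M * b = M * b').
  { rewrite <- E1.
    replace ((3 * a1 ^ 2 + b1 ^ 2) * b) with
      (b1 * (b * b1 + 3 * a * a1) + 3 * a1 * (b * a1 - b1 * a)) by ring.
    rewrite HD, HY. ring. }
  f_equal; eapply Z.mul_cancel_l; eauto; lia.
Qed.

Lemma cross_quotient_bound M a1 b1 a b j : 1 <= M ->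
  norm3 a1 b1 = M -> norm3 a b = M -> 6 * (b * a1 - b1 * a) = j * M -> -3 <= j <= 3.
Proof.
  intros HM E1 E Ej. pose proof (norm3_mul a b a1 b1) as I.
  rewrite E, E1 in I. unfold norm3 in I.
  assert (H36 : j * j * (M * M) <= 12 * (M * M)).
  { replace (j * j * (M * M)) with ((6 * (b * a1 - b1 * a)) ^ 2) by (rewrite Ej; ring).
    pose proof (Z.square_nonneg (b * b1 + 3 * a * a1)). nia. }
  apply Z.mul_le_mono_pos_r in H36; nia.
Qed.

Lemma gcd_1_divide_l g n a : (g | n) -> Z.gcd n a = 1 -> Z.gcd g a = 1.
Proof. rewrite !Zgcd_1_rel_prime. eauto using rel_prime_div. Qed.

Lemma gcd_norm3_fst a b : Z.gcd a b = 1 -> Z.gcd a (norm3 a b) = 1.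
Proof.
  intros Hab. unfold norm3.
  set (q := Z.gcd a (3 * a ^ 2 + b ^ 2)).
  assert (Hqa : (q | a)) by apply Z.gcd_divide_l.
  assert (Hqb2 : (q | b * b)).
  { replace (b * b) with (3 * a ^ 2 + b ^ 2 - 3 * a * a) by ring.
    apply Z.divide_sub_r; [apply Z.gcd_divide_r|].
    apply Z.divide_mul_r; auto. }
  assert (Hqb : (q | b)).
  { apply Z.gauss with b; auto. apply (gcd_1_divide_l q a); auto. }
  assert (Hq1 : (q | 1)) by (rewrite <- Hab; apply Z.gcd_greatest; auto).
  apply Z.divide_1_r_abs in Hq1. pose proof (Z.gcd_nonneg a (3 * a ^ 2 + b ^ 2)). lia.
Qed.

Lemma gcd_norm3_snd_divide_3 a b : Z.gcd a b = 1 -> (Z.gcd b (norm3 a b) | 3).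
Proof.
  intros Hab. set (q := Z.gcd b (norm3 a b)).
  assert (Hqa : Z.gcd q a = 1).
  { apply (gcd_1_divide_l q b a); [apply Z.gcd_divide_l|]. now rewrite Z.gcd_comm. }
  assert (H3 : (q | a * (a * 3))).
  { replace (a * (a * 3)) with (norm3 a b - b * b) by (unfold norm3; ring).
    apply Z.divide_sub_r; [apply Z.gcd_divide_r|].
    apply Z.divide_mul_l, Z.gcd_divide_l. }
  apply Z.gauss in H3; auto. apply Z.gauss in H3; auto.
Qed.

Lemma divide_gcd_mul_gcd n x y : 1 <= n -> (n | x * y) -> (n | Z.gcd x n * Z.gcd y n).
Proof.
  intros Hn Hd.
  pose proof (gcd_pos_r x n Hn) as Hg. set (g := Z.gcd x n) in *.
  assert (Ex : x = g * (x / g)) by (apply Zdivide_Zdiv_eq; [lia|apply Z.gcd_divide_l]).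
  assert (En : n = g * (n / g)) by (apply Zdivide_Zdiv_eq; [lia|apply Z.gcd_divide_r]).
  assert (Hc : Z.gcd (n / g) (x / g) = 1).
  { rewrite Z.gcd_comm. apply Z.gcd_div_gcd; [lia|reflexivity]. }
  assert (Hy : (n / g | y)).
  { apply Z.gauss with (x / g); auto.
    rewrite Ex, En, <- Z.mul_assoc in Hd.
    apply Z.mul_divide_cancel_l in Hd; auto; lia. }
  rewrite En at 1. apply Z.mul_divide_mono_l.
  apply Z.gcd_greatest; auto. exists g; lia.
Qed.

(* [x y = gcd x y * lcm x y], and [lcm x y] divides [D]. *)
Lemma mul_divide_of_gcd_divide x y h D : 1 <= x -> 1 <= y ->
  (x | D) -> (y | D) -> (Z.gcd x y | h) -> (x * y | h * D).
Proof.
  intros Hx Hy HxD HyD Hh.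
  pose proof (gcd_pos_r x y Hy) as Hg.
  assert (Exy : x * y = Z.gcd x y * Z.lcm x y).
  { unfold Z.lcm. rewrite Z.abs_eq.
    - rewrite (Zdivide_Zdiv_eq (Z.gcd x y) y) at 1 by (lia || apply Z.gcd_divide_r). ring.
    - apply Z.mul_nonneg_nonneg; [lia|]. apply Z.div_pos; lia. }
  rewrite Exy. apply (Z.divide_trans _ (h * Z.lcm x y)).
  - apply Z.mul_divide_mono_r; auto.
  - apply Z.mul_divide_mono_l, Z.lcm_least; auto.
Qed.

Lemma divide_cross g M a0 s a b a1 b1 : (g | M) -> Z.gcd M a0 = 1 ->
  (g | b * a0 - a * s) -> (g | b1 * a0 - a1 * s) -> (g | b * a1 - b1 * a).
Proof.
  intros HgM HM Hu Hu1. apply Z.gauss with a0.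
  - replace (a0 * (b * a1 - b1 * a)) with (a1 * (b * a0 - a * s) - a * (b1 * a0 - a1 * s))
      by ring.
    apply Z.divide_sub_r; apply Z.divide_mul_r; auto.
  - apply (gcd_1_divide_l g M a0); auto.
Qed.

Lemma gcd_cross_gcds_divide_6 M a0 b0 a1 b1 :
  Z.gcd a0 b0 = 1 -> norm3 a0 b0 = M -> Z.gcd a1 b1 = 1 -> norm3 a1 b1 = M ->
  (Z.gcd (Z.gcd (b1 * a0 - a1 * b0) M) (Z.gcd (b1 * a0 + a1 * b0) M) | 6).
Proof.
  intros P0 E0 P1 E1.
  set (h := Z.gcd (Z.gcd (b1 * a0 - a1 * b0) M) (Z.gcd (b1 * a0 + a1 * b0) M)).
  assert (HhM : (h | M)) by (eapply Z.divide_trans; apply Z.gcd_divide_r).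
  assert (Hh2b : (h | 2 * b1)).
  { apply Z.gauss with a0.
    - replace (a0 * (2 * b1)) with ((b1 * a0 - a1 * b0) + (b1 * a0 + a1 * b0)) by ring.
      apply Z.divide_add_r.
      + eapply Z.divide_trans; [apply Z.gcd_divide_l|apply Z.gcd_divide_l].
      + eapply Z.divide_trans; [apply Z.gcd_divide_r|apply Z.gcd_divide_l].
    - apply (gcd_1_divide_l h M a0); auto.
      rewrite Z.gcd_comm, <- E0. apply gcd_norm3_fst; auto. }
  assert (H2 : (h | Z.gcd (2 * b1) (2 * M))) by (apply Z.gcd_greatest; auto using Z.divide_mul_r).
  rewrite Z.gcd_mul_mono_l_nonneg in H2 by lia.
  eapply Z.divide_trans; [exact H2|]. apply (Z.mul_divide_mono_l _ 3 2).
  rewrite <- E1. apply gcd_norm3_snd_divide_3; auto.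
Qed.

(* With [u1, v1 = b1 a0 -+ a1 b0], [M] divides [u1 v1 = M (a0^2 - a1^2)]; both
   [gcd u1 M] and [gcd v1 M] divide [b a1 - b1 a], and their gcd divides 6. *)
Lemma divide_cross_of_same_gcds M a0 b0 a1 b1 a b : 1 <= M ->
  Z.gcd a0 b0 = 1 -> norm3 a0 b0 = M -> Z.gcd a1 b1 = 1 -> norm3 a1 b1 = M ->
  Z.gcd (b * a0 - a * b0) M = Z.gcd (b1 * a0 - a1 * b0) M ->
  Z.gcd (b * a0 + a * b0) M = Z.gcd (b1 * a0 + a1 * b0) M ->
  (M | 6 * (b * a1 - b1 * a)).
Proof.
  intros HM P0 E0 P1 E1 Hu Hv.
  set (g1 := Z.gcd (b1 * a0 - a1 * b0) M). set (g2 := Z.gcd (b1 * a0 + a1 * b0) M).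
  assert (C0 : Z.gcd M a0 = 1).
  { rewrite Z.gcd_comm, <- E0. apply gcd_norm3_fst; auto. }
  assert (Hprod : (M | g1 * g2)).
  { apply divide_gcd_mul_gcd; auto. exists (a0 ^ 2 - a1 ^ 2).
    transitivity (a0 ^ 2 * norm3 a1 b1 - a1 ^ 2 * norm3 a0 b0); [unfold norm3; ring|].
    rewrite E0, E1. ring. }
  assert (Hg1 : (g1 | b * a1 - b1 * a)).
  { apply (divide_cross g1 M a0 b0); auto; [apply Z.gcd_divide_r| |apply Z.gcd_divide_l].
    unfold g1. rewrite <- Hu. apply Z.gcd_divide_l. }
  assert (Hg2 : (g2 | b * a1 - b1 * a)).
  { apply (divide_cross g2 M a0 (- b0)); auto; [apply Z.gcd_divide_r| |].
    - replace (b * a0 - a * - b0) with (b * a0 + a * b0) by ring.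
      unfold g2. rewrite <- Hv. apply Z.gcd_divide_l.
    - replace (b1 * a0 - a1 * - b0) with (b1 * a0 + a1 * b0) by ring.
      apply Z.gcd_divide_l. }
  eapply Z.divide_trans; [exact Hprod|].
  apply mul_divide_of_gcd_divide; try apply gcd_pos_r; auto.
  apply gcd_cross_gcds_divide_6; auto.
Qed.

Definition Zpair_eq_dec : forall x y : Z * Z, {x = y} + {x <> y}.
Proof. decide equality; apply Z.eq_dec. Defined.

Definition cross_gcds (M a0 b0 : Z) (s : Z * Z) : Z * Z :=
  (Z.gcd (snd s * a0 - fst s * b0) M, Z.gcd (snd s * a0 + fst s * b0) M).

(* A fiber injects into [[-3, 3] x bool] via
   [(a, b) |-> (6 (b a1 - b1 a) / M, sign of (b b1 + 3 a a1))]. *)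
Lemma length_fiber_cross_gcds_le M a0 b0 a1 b1 : 1 <= M ->
  In (a0, b0) (prim_reps M) -> In (a1, b1) (prim_reps M) ->
  (length (fiber Zpair_eq_dec (cross_gcds M a0 b0) (prim_reps M)
             (cross_gcds M a0 b0 (a1, b1))) <= 14)%nat.
Proof.
  intros HM H0 H1.
  apply In_prim_reps in H0 as [E0 P0]; [|lia]. apply In_prim_reps in H1 as [E1 P1]; [|lia].
  set (F := fun s : Z * Z =>
    (6 * (snd s * a1 - b1 * fst s) / M, 0 <=? snd s * b1 + 3 * fst s * a1)).
  assert (Hfib : forall a b, In (a, b) (fiber Zpair_eq_dec (cross_gcds M a0 b0) (prim_reps M)
                                  (cross_gcds M a0 b0 (a1, b1))) ->
            norm3 a b = M /\ (M | 6 * (b * a1 - b1 * a))).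
  { intros a b Hs. apply In_fiber in Hs as [Hs HG].
    apply In_prim_reps in Hs as [E _]; [|lia]. split; auto.
    unfold cross_gcds in HG. cbn [fst snd] in HG. injection HG as Hu Hv.
    apply (divide_cross_of_same_gcds M a0 b0 a1 b1 a b); auto. }
  change 14%nat with (length (list_prod (Zrange (-3) 7) [true; false])).
  apply (length_le_of_injective_in _ _ F).
  - apply NoDup_filter, NoDup_prim_reps.
  - intros [a b] [a' b'] Hs Hs' HF.
    apply Hfib in Hs as [E [j Ej]]. apply Hfib in Hs' as [E' [j' Ej']].
    unfold F in HF; cbn [fst snd] in HF. apply pair_equal_spec in HF as [Hj Hsign].
    rewrite Ej, Ej', !Z.div_mul in Hj by lia. subst j'.
    apply (rep_eq_of_cross_sign M a1 b1); auto. lia.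
  - intros [a b] Hs. apply Hfib in Hs as [E [j Ej]].
    unfold F; cbn [fst snd]. rewrite Ej, Z.div_mul by lia.
    apply in_prod; [apply In_Zrange|destruct (_ <=? _); simpl; auto].
    pose proof (cross_quotient_bound M a1 b1 a b j HM E1 E Ej). lia.
Qed.

Lemma length_prim_reps_le M : 1 <= M -> (length (prim_reps M) <= 14 * (ndiv M * ndiv M))%nat.
Proof.
  intros HM. destruct (prim_reps M) as [|[a0 b0] r] eqn:E; [simpl; lia|].
  assert (H0 : In (a0, b0) (prim_reps M)) by (rewrite E; now left).
  rewrite <- E. unfold ndiv. rewrite <- length_prod.
  apply (length_le_mul_of_fibers Zpair_eq_dec _ _ (cross_gcds M a0 b0)).
  - intros s _. unfold cross_gcds.
    apply in_prod; apply In_divisors; auto; split; auto using gcd_pos_r, Z.gcd_divide_r.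
  - intros [a1 b1] H1. now apply length_fiber_cross_gcds_le.
Qed.

Lemma rep_div_gcd M a b : 1 <= M -> norm3 a b = M ->
  1 <= Z.gcd a b /\ a = Z.gcd a b * (a / Z.gcd a b) /\ b = Z.gcd a b * (b / Z.gcd a b) /\
  Z.gcd (a / Z.gcd a b) (b / Z.gcd a b) = 1 /\
  M = Z.gcd a b * Z.gcd a b * norm3 (a / Z.gcd a b) (b / Z.gcd a b).
Proof.
  intros HM E. set (g := Z.gcd a b).
  assert (Hg : 1 <= g).
  { pose proof (Z.gcd_nonneg a b). destruct (Z.eq_dec g 0) as [E0|]; [|lia].
    apply Z.gcd_eq_0 in E0 as [-> ->]. unfold norm3 in E. simpl in E. lia. }
  assert (Ea : a = g * (a / g)) by (apply Zdivide_Zdiv_eq; [lia|apply Z.gcd_divide_l]).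
  assert (Eb : b = g * (b / g)) by (apply Zdivide_Zdiv_eq; [lia|apply Z.gcd_divide_r]).
  repeat split; auto.
  - apply Z.gcd_div_gcd; [lia|reflexivity].
  - rewrite <- E. unfold norm3. rewrite Ea at 1. rewrite Eb at 1. ring.
Qed.

Theorem length_reps_le M : 1 <= M -> (length (reps M) <= 14 * ndiv M ^ 3)%nat.
Proof.
  intros HM. replace (14 * ndiv M ^ 3)%nat with (14 * (ndiv M * ndiv M) * ndiv M)%nat
    by (simpl; ring).
  apply (length_le_mul_of_fibers Z.eq_dec _ _ (fun s => Z.gcd (fst s) (snd s))).
  - intros [a b] Hs. apply In_reps in Hs; [|lia].
    destruct (rep_div_gcd M a b) as [Hg [_ [_ [_ EM]]]]; auto.
    cbn [fst snd]. apply In_divisors; auto. split; auto. rewrite EM at 1.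
    exists (Z.gcd a b * norm3 (a / Z.gcd a b) (b / Z.gcd a b)). ring.
  - intros [a0 b0] H0. apply In_reps in H0; [|lia]. cbn [fst snd].
    destruct (rep_div_gcd M a0 b0) as [Hg [_ [_ [_ EM]]]]; auto.
    set (g := Z.gcd a0 b0) in *. set (M' := norm3 (a0 / g) (b0 / g)) in *.
    assert (HM' : 1 <= M') by nia.
    assert (Hfib : forall a b, In (a, b) (fiber Z.eq_dec (fun s => Z.gcd (fst s) (snd s))
                                          (reps M) g) ->
              In (a / g, b / g) (prim_reps M') /\ a = g * (a / g) /\ b = g * (b / g)).
    { intros a b Hs. apply In_fiber in Hs as [Hs Hgs]. cbn [fst snd] in Hgs.
      apply In_reps in Hs; [|lia].
      destruct (rep_div_gcd M a b) as [_ [Ea [Eb [Hp EM']]]]; auto.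
      rewrite Hgs in Ea, Eb, Hp, EM'. repeat split; auto.
      apply In_prim_reps; [lia|]. split; auto.
      apply (Z.mul_cancel_l _ _ (g * g)); lia. }
    eapply Nat.le_trans.
    + apply (length_le_of_injective_in _ (prim_reps M') (fun s => (fst s / g, snd s / g))).
      * apply NoDup_filter, NoDup_reps.
      * intros [a b] [a' b'] Hs Hs' H. cbn [fst snd] in H.
        apply Hfib in Hs as [_ [Ea Eb]]. apply Hfib in Hs' as [_ [Ea' Eb']].
        apply pair_equal_spec in H as [H1 H2]. rewrite Ea, Eb, Ea', Eb', H1, H2. reflexivity.
      * intros [a b] Hs. now apply Hfib in Hs as [Hs _].
    + eapply Nat.le_trans; [apply length_prim_reps_le; auto|].
      assert (HdM : (ndiv M' <= ndiv M)%nat).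
      { apply ndiv_le_of_divide; auto. exists (g * g). rewrite EM. ring. }
      apply Nat.mul_le_mono_l. apply Nat.mul_le_mono; auto.
Qed.

End NormForm.

Definition lsum {A} (l : list A) (f : A -> R) : R := fold_right (fun a s => f a + s) 0 l.

Definition Clsum {A} (l : list A) (f : A -> C) : C :=
  fold_right (fun a s => Cplus (f a) s) (RtoC 0) l.

Lemma lsum_app {A} (l l' : list A) f : lsum (l ++ l') f = lsum l f + lsum l' f.
Proof. induction l; simpl; [ring|rewrite IHl; ring]. Qed.

Lemma lsum_ext {A} (l : list A) f g : (forall x, In x l -> f x = g x) -> lsum l f = lsum l g.
Proof.
  induction l as [|a l IH]; intros H; simpl; auto.
  f_equal; [apply H; now left|apply IH; intros; apply H; now right].
Qed.

Lemma lsum_le {A} (l : list A) f g : (forall x, In x l -> f x <= g x) -> lsum l f <= lsum l g.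
Proof.
  induction l as [|a l IH]; intros H; simpl; [lra|].
  apply Rplus_le_compat; [apply H; now left|apply IH; intros; apply H; now right].
Qed.

Lemma lsum_nonneg {A} (l : list A) f : (forall x, In x l -> 0 <= f x) -> 0 <= lsum l f.
Proof.
  induction l as [|a l IH]; intros H; simpl; [lra|].
  apply Rplus_le_le_0_compat; [apply H; now left|apply IH; intros; apply H; now right].
Qed.

Lemma lsum_plus {A} (l : list A) f g : lsum l (fun x => f x + g x) = lsum l f + lsum l g.
Proof. induction l; simpl; [ring|rewrite IHl; ring]. Qed.

Lemma lsum_scal {A} (l : list A) a f : lsum l (fun x => a * f x) = a * lsum l f.
Proof. induction l; simpl; [ring|rewrite IHl; ring]. Qed.

Lemma lsum_map {A B} (l : list B) (h : B -> A) f : lsum (map h l) f = lsum l (fun x => f (h x)).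
Proof. induction l; simpl; congruence. Qed.

Lemma lsum_Permutation {A} (l l' : list A) f : Permutation l l' -> lsum l f = lsum l' f.
Proof. induction 1; simpl; congruence || ring. Qed.

Lemma lsum_prod {A B} (l : list A) (l' : list B) f :
  lsum (list_prod l l') f = lsum l (fun a => lsum l' (fun b => f (a, b))).
Proof.
  induction l; simpl; auto. rewrite lsum_app, IHl, lsum_map. reflexivity.
Qed.

Lemma lsum_comm {A B} (l : list A) (l' : list B) f :
  lsum l (fun a => lsum l' (fun b => f a b)) = lsum l' (fun b => lsum l (fun a => f a b)).
Proof.
  induction l as [|a l IH]; simpl.
  - induction l'; simpl; [reflexivity|]. rewrite <- IHl'. ring.
  - rewrite IH, <- lsum_plus. reflexivity.
Qed.

Lemma lsum_mult {A B} (l : list A) (l' : list B) f g :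
  lsum l f * lsum l' g = lsum (list_prod l l') (fun p => f (fst p) * g (snd p)).
Proof.
  rewrite lsum_prod. transitivity (lsum l (fun a => f a * lsum l' g)).
  - rewrite (Rmult_comm (lsum l f)), <- lsum_scal. apply lsum_ext; intros; ring.
  - apply lsum_ext. intros a _. rewrite <- lsum_scal. reflexivity.
Qed.

Lemma lsum_indicator {A} (l : list A) (f : A -> bool) a :
  lsum l (fun x => if f x then a else 0) = a * INR (length (filter f l)).
Proof.
  induction l as [|x l IH]; simpl; [ring|]. rewrite IH.
  destruct (f x); simpl length; [rewrite S_INR|]; ring.
Qed.

Lemma Clsum_ext {A} (l : list A) f g : (forall x, In x l -> f x = g x) -> Clsum l f = Clsum l g.
Proof.
  induction l as [|a l IH]; intros H; simpl; auto.
  f_equal; [apply H; now left|apply IH; intros; apply H; now right].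
Qed.

Lemma Clsum_app {A} (l l' : list A) f : Clsum (l ++ l') f = Cplus (Clsum l f) (Clsum l' f).
Proof. induction l; simpl; [ring|rewrite IHl; ring]. Qed.

Lemma Clsum_map {A B} (l : list B) (h : B -> A) f : Clsum (map h l) f = Clsum l (fun x => f (h x)).
Proof. induction l; simpl; congruence. Qed.

Lemma Clsum_scal {A} (l : list A) z f : Cmult z (Clsum l f) = Clsum l (fun x => Cmult z (f x)).
Proof. induction l; simpl; [ring|rewrite <- IHl; ring]. Qed.

Lemma Clsum_mult {A B} (l : list A) (l' : list B) f g :
  Cmult (Clsum l f) (Clsum l' g) =
  Clsum (list_prod l l') (fun p => Cmult (f (fst p)) (g (snd p))).
Proof.
  induction l as [|a l IH]; simpl; [ring|].
  rewrite Clsum_app, <- IH, Clsum_map. cbn [fst snd]. rewrite <- Clsum_scal. ring.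
Qed.

Lemma fst_Clsum {A} (l : list A) f : fst (Clsum l f) = lsum l (fun x => fst (f x)).
Proof. induction l; simpl; congruence. Qed.

Lemma snd_Clsum {A} (l : list A) f : snd (Clsum l f) = lsum l (fun x => snd (f x)).
Proof. induction l; simpl; congruence. Qed.

Lemma sum_n_lsum (f : nat -> R) n : sum_n f n = lsum (seq 0 (S n)) f.
Proof.
  induction n.
  - rewrite sum_O. simpl. ring.
  - rewrite sum_Sn, IHn, (seq_S (S n)), lsum_app. simpl. unfold plus; simpl. ring.
Qed.

Lemma sum_n_Clsum (f : nat -> C) n : sum_n f n = Clsum (seq 0 (S n)) f.
Proof.
  induction n.
  - rewrite sum_O. simpl. change (f 0%nat = f 0%nat + 0)%C. ring.
  - rewrite sum_Sn, IHn, (seq_S (S n)), Clsum_app. simpl. change (plus ?x ?y) with (x + y)%C. ring.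
Qed.

Lemma lsum_le_Series (a : nat -> R) n : (forall k, 0 <= a k) -> ex_series a ->
  lsum (seq 0 n) a <= Series a.
Proof.
  intros Ha He.
  assert (Hinc : forall k, sum_n a k <= sum_n a (S k)).
  { intros k. rewrite sum_Sn. unfold plus; simpl. pose proof (Ha (S k)); lra. }
  pose proof (is_lim_seq_incr_compare _ _ (Series_correct _ He) Hinc) as Hc.
  destruct n as [|n].
  - specialize (Hc 0%nat). rewrite sum_O in Hc. simpl. pose proof (Ha 0%nat); lra.
  - rewrite <- sum_n_lsum. apply Hc.
Qed.

Lemma trig_period_Z (K : Z) r :
  sin (r + 2 * IZR K * PI) = sin r /\ cos (r + 2 * IZR K * PI) = cos r.
Proof.
  destruct (Z_le_gt_dec 0 K) as [HK|HK].
  - replace (IZR K) with (INR (Z.to_nat K)) by (rewrite INR_IZR_INZ; f_equal; lia).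
    split; [apply sin_period|apply cos_period].
  - replace (IZR K) with (- INR (Z.to_nat (- K)))
      by (rewrite INR_IZR_INZ, <- opp_IZR; f_equal; lia).
    pose proof (sin_period (r + 2 * - INR (Z.to_nat (- K)) * PI) (Z.to_nat (- K))) as Hs.
    pose proof (cos_period (r + 2 * - INR (Z.to_nat (- K)) * PI) (Z.to_nat (- K))) as Hc.
    replace (r + 2 * - INR (Z.to_nat (- K)) * PI + 2 * INR (Z.to_nat (- K)) * PI)
      with r in Hs, Hc by ring.
    auto.
Qed.

Definition wave (A B k r x : R) : R := A * cos (k * x + r) + B * sin (k * x + r).

Lemma ex_RInt_wave A B k r u v : ex_RInt (wave A B k r) u v.
Proof.
  apply (@ex_RInt_continuous R_CompleteNormedModule). intros z _. unfold wave.
  apply (ex_derive_continuous (fun x => A * cos (k * x + r) + B * sin (k * x + r))).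
  auto_derive; auto.
Qed.

Lemma RInt_wave mu A B (K : Z) r : 0 < mu ->
  RInt (wave A B (IZR K / mu) r) 0 (2 * PI * mu) =
  if (K =? 0)%Z then 2 * PI * mu * (A * cos r + B * sin r) else 0.
Proof.
  intros Hmu. unfold wave. destruct (Z.eqb_spec K 0) as [->|HK].
  - rewrite (RInt_ext _ (fun _ => A * cos r + B * sin r)).
    + rewrite RInt_const. unfold scal; simpl. unfold mult; simpl. ring.
    + intros x _. unfold Rdiv. rewrite Rmult_0_l, Rmult_0_l, Rplus_0_l. reflexivity.
  - set (k := IZR K / mu).
    assert (Hk : k <> 0).
    { unfold k. apply Rmult_integral_contrapositive_currified; [apply not_0_IZR; auto|].
      apply Rinv_neq_0_compat; lra. }
    set (F := fun x => (A * sin (k * x + r) - B * cos (k * x + r)) / k).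
    assert (HF : is_RInt (fun x => A * cos (k * x + r) + B * sin (k * x + r)) 0 (2 * PI * mu)
                   (minus (F (2 * PI * mu)) (F 0))).
    { apply (is_RInt_derive F).
      - intros x _. unfold F. auto_derive; auto. field; auto.
      - intros x _. apply (ex_derive_continuous
          (fun x => A * cos (k * x + r) + B * sin (k * x + r))). auto_derive; auto. }
    rewrite (is_RInt_unique _ _ _ _ HF). unfold F, minus, plus, opp; simpl.
    replace (k * (2 * PI * mu) + r) with (r + 2 * IZR K * PI) by (unfold k; field; lra).
    destruct (trig_period_Z K r) as [-> ->]. rewrite Rmult_0_r, Rplus_0_l. field; auto.
Qed.

Lemma ex_RInt_lsum {I} (l : list I) (f : I -> R -> R) u v :
  (forall p, In p l -> ex_RInt (f p) u v) -> ex_RInt (fun x => lsum l (fun p => f p x)) u v.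
Proof.
  induction l as [|a l IH]; intros H; simpl.
  - apply ex_RInt_const.
  - apply (ex_RInt_plus (f a) (fun x => lsum l (fun p => f p x))).
    + apply H; now left.
    + apply IH; intros; apply H; now right.
Qed.

Lemma RInt_lsum {I} (l : list I) (f : I -> R -> R) u v :
  (forall p, In p l -> ex_RInt (f p) u v) ->
  RInt (fun x => lsum l (fun p => f p x)) u v = lsum l (fun p => RInt (f p) u v).
Proof.
  induction l as [|a l IH]; intros H; simpl.
  - rewrite RInt_const. unfold scal; simpl; unfold mult; simpl. ring.
  - rewrite (RInt_plus (f a) (fun x => lsum l (fun p => f p x))).
    + rewrite IH; auto. intros; apply H; now right.
    + apply H; now left.
    + apply ex_RInt_lsum; intros; apply H; now right.
Qed.

(* Orthogonality of the characters [e^{i (a x / lam + b t / lam^2)}] on the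
   torus [T_lam x T_{lam^2}]. *)
Lemma RInt_RInt_waves {I} (l : list I) lam (A B : I -> R) (a b : I -> Z) : 0 < lam ->
  RInt (fun t => RInt (fun x => lsum l (fun p =>
      wave (A p) (B p) (IZR (a p) / lam) (IZR (b p) / lam ^ 2 * t) x)) 0 (2 * PI * lam))
    0 (2 * PI * lam ^ 2) =
  lsum l (fun p => if andb (a p =? 0)%Z (b p =? 0)%Z
                   then 2 * PI * lam * (2 * PI * lam ^ 2) * A p else 0).
Proof.
  intros Hl. assert (Hl2 : 0 < lam ^ 2) by (apply pow_lt; auto).
  rewrite (RInt_ext _ (fun t => lsum l (fun p =>
     wave (if (a p =? 0)%Z then 2 * PI * lam * A p else 0)
          (if (a p =? 0)%Z then 2 * PI * lam * B p else 0) (IZR (b p) / lam ^ 2) 0 t))).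
  - rewrite RInt_lsum by (intros; apply ex_RInt_wave).
    apply lsum_ext. intros p _. rewrite RInt_wave, cos_0, sin_0 by auto.
    destruct (a p =? 0)%Z, (b p =? 0)%Z; simpl; ring.
  - intros t _. rewrite RInt_lsum by (intros; apply ex_RInt_wave).
    apply lsum_ext. intros p _. rewrite RInt_wave by auto. unfold wave.
    destruct (a p =? 0)%Z; [|ring]. rewrite Rplus_0_r. ring.
Qed.

Definition Cdot (z w : C) : R := fst z * fst w + snd z * snd w.
Definition Cwedge (z w : C) : R := fst z * snd w - snd z * fst w.

Lemma Cdot_le_Cmod_mul z w : Cdot z w <= Cmod z * Cmod w.
Proof.
  unfold Cdot, Cmod. destruct z as [p q], w as [p' q']. cbn [fst snd].
  rewrite <- sqrt_mult by nra.
  destruct (Rle_or_lt (p * p' + q * q') 0) as [H|H].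
  - pose proof (sqrt_pos ((p ^ 2 + q ^ 2) * (p' ^ 2 + q' ^ 2))); lra.
  - rewrite <- (sqrt_pow2 (p * p' + q * q')) by lra. apply sqrt_le_1_alt.
    replace ((p ^ 2 + q ^ 2) * (p' ^ 2 + q' ^ 2))
      with ((p * p' + q * q') ^ 2 + (p * q' - q * p') ^ 2) by ring.
    pose proof (pow2_ge_0 (p * q' - q * p')). lra.
Qed.

Lemma Cmod_Clsum_sq {A} (l : list A) g :
  Cmod (Clsum l g) ^ 2 = lsum (list_prod l l) (fun p => Cdot (g (fst p)) (g (snd p))).
Proof.
  unfold Cmod. rewrite pow2_sqrt by nra.
  rewrite fst_Clsum, snd_Clsum, <- !Rsqr_pow2. unfold Rsqr.
  rewrite !lsum_mult, <- lsum_plus. reflexivity.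
Qed.

Lemma eix_add a b : Cmult (eix a) (eix b) = eix (a + b).
Proof. unfold eix, Cmult; simpl. rewrite cos_plus, sin_plus. f_equal; ring. Qed.

Lemma Cdot_mul_eix z w th th' :
  Cdot (Cmult z (eix th)) (Cmult w (eix th')) =
  Cdot z w * cos (th - th') + Cwedge z w * sin (th - th').
Proof.
  destruct z as [p q], w as [p' q']. unfold Cdot, Cwedge, eix, Cmult; simpl.
  rewrite cos_minus, sin_minus. ring.
Qed.

Definition modes (N : nat) : list Z := Zrange (- Z.of_nat N) (S (2 * N)).

Definition triples (N : nat) : list (Z * Z * Z) :=
  list_prod (list_prod (modes N) (modes N)) (modes N).

Definition tsum (k : Z * Z * Z) : Z := (fst (fst k) + snd (fst k) + snd k)%Z.
Definition tsqsum (k : Z * Z * Z) : Z := (fst (fst k) ^ 2 + snd (fst k) ^ 2 + snd k ^ 2)%Z.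

Definition resonant (k k' : Z * Z * Z) : bool :=
  andb (tsum k =? tsum k')%Z (tsqsum k =? tsqsum k')%Z.

Definition tprod (c : Z -> C) (k : Z * Z * Z) : C :=
  Cmult (Cmult (c (fst (fst k))) (c (snd (fst k)))) (c (snd k)).

Definition tphase (lam t x : R) (k : Z * Z * Z) : R :=
  phase lam t x (fst (fst k)) + phase lam t x (snd (fst k)) + phase lam t x (snd k).

Lemma tphase_sub lam t x k k' : 0 < lam ->
  tphase lam t x k - tphase lam t x k' =
  IZR (tsum k - tsum k') / lam * x + IZR (tsqsum k' - tsqsum k) / lam ^ 2 * t.
Proof.
  intros Hl. unfold tphase, phase, freq, tsum, tsqsum.
  rewrite !Z.pow_2_r, !minus_IZR, !plus_IZR, !mult_IZR. field. lra.
Qed.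

Lemma lin_sol_trunc_Clsum lam c N t x :
  lin_sol_trunc lam c N t x =
  Cmult (RtoC (/ (2 * PI * lam))) (Clsum (modes N) (fun k => Cmult (c k) (eix (phase lam t x k)))).
Proof.
  unfold lin_sol_trunc, modes, Zrange. rewrite sum_n_Clsum, Clsum_map.
  f_equal. apply Clsum_ext. intros n _.
  replace (- Z.of_nat N + Z.of_nat n)%Z with (Z.of_nat n - Z.of_nat N)%Z by lia. reflexivity.
Qed.

Lemma Clsum_cube {A} (l : list A) g :
  Cmult (Cmult (Clsum l g) (Clsum l g)) (Clsum l g) =
  Clsum (list_prod (list_prod l l) l)
    (fun k => Cmult (Cmult (g (fst (fst k))) (g (snd (fst k)))) (g (snd k))).
Proof. rewrite !Clsum_mult. reflexivity. Qed.

Lemma Cmod_lin_sol_trunc_pow6 lam c N t x : 0 < lam ->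
  Cmod (lin_sol_trunc lam c N t x) ^ 6 =
  lsum (list_prod (triples N) (triples N)) (fun p =>
    wave ((/ (2 * PI * lam)) ^ 6 * Cdot (tprod c (fst p)) (tprod c (snd p)))
         ((/ (2 * PI * lam)) ^ 6 * Cwedge (tprod c (fst p)) (tprod c (snd p)))
         (IZR (tsum (fst p) - tsum (snd p)) / lam)
         (IZR (tsqsum (snd p) - tsqsum (fst p)) / lam ^ 2 * t) x).
Proof.
  intros Hl. rewrite lin_sol_trunc_Clsum, Cmod_mult, Cmod_R, Rabs_pos_eq
    by (apply Rlt_le, Rinv_0_lt_compat; pose proof PI_RGT_0; nra).
  rewrite Rpow_mult_distr. set (S := Clsum (modes N) _).
  replace (Cmod S ^ 6) with (Cmod (Cmult (Cmult S S) S) ^ 2) by (rewrite !Cmod_mult; ring).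
  unfold S. rewrite Clsum_cube, Cmod_Clsum_sq, <- lsum_scal.
  apply lsum_ext. intros [k k'] _. cbn [fst snd].
  assert (Hk : forall k0 : Z * Z * Z,
    Cmult (Cmult (Cmult (c (fst (fst k0))) (eix (phase lam t x (fst (fst k0)))))
                 (Cmult (c (snd (fst k0))) (eix (phase lam t x (snd (fst k0))))))
          (Cmult (c (snd k0)) (eix (phase lam t x (snd k0)))) =
    Cmult (tprod c k0) (eix (tphase lam t x k0))).
  { intros k0. unfold tprod, tphase. rewrite <- !eix_add. ring. }
  rewrite !Hk, Cdot_mul_eix, tphase_sub by auto. unfold wave. ring.
Qed.

Lemma resonant_spec k k' :
  andb (tsum k - tsum k' =? 0)%Z (tsqsum k' - tsqsum k =? 0)%Z = resonant k k'.
Proof.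
  unfold resonant.
  destruct (Z.eqb_spec (tsum k - tsum k') 0), (Z.eqb_spec (tsum k) (tsum k')),
    (Z.eqb_spec (tsqsum k' - tsqsum k) 0), (Z.eqb_spec (tsqsum k) (tsqsum k'));
    simpl; auto; lia.
Qed.

Lemma RInt_RInt_Cmod_lin_sol_trunc_pow6 lam c N : 0 < lam ->
  RInt (fun t => RInt (fun x => Cmod (lin_sol_trunc lam c N t x) ^ 6) 0 (2 * PI * lam))
    0 (2 * PI * lam ^ 2) =
  2 * PI * lam * (2 * PI * lam ^ 2) * (/ (2 * PI * lam)) ^ 6 *
  lsum (list_prod (triples N) (triples N)) (fun p =>
    if resonant (fst p) (snd p) then Cdot (tprod c (fst p)) (tprod c (snd p)) else 0).
Proof.
  intros Hl. set (k6 := (/ (2 * PI * lam)) ^ 6).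
  transitivity (RInt (fun t => RInt (fun x =>
    lsum (list_prod (triples N) (triples N)) (fun p =>
      wave (k6 * Cdot (tprod c (fst p)) (tprod c (snd p)))
           (k6 * Cwedge (tprod c (fst p)) (tprod c (snd p)))
           (IZR (tsum (fst p) - tsum (snd p)) / lam)
           (IZR (tsqsum (snd p) - tsqsum (fst p)) / lam ^ 2 * t) x)) 0 (2 * PI * lam))
    0 (2 * PI * lam ^ 2)).
  { apply RInt_ext; intros t _; apply RInt_ext; intros x _.
    apply Cmod_lin_sol_trunc_pow6; auto. }
  etransitivity.
  { apply (RInt_RInt_waves _ lam
      (fun p => k6 * Cdot (tprod c (fst p)) (tprod c (snd p)))
      (fun p => k6 * Cwedge (tprod c (fst p)) (tprod c (snd p)))
      (fun p => tsum (fst p) - tsum (snd p))%Z (fun p => tsqsum (snd p) - tsqsum (fst p))%Z Hl). }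
  rewrite <- lsum_scal. apply lsum_ext. intros p _. rewrite resonant_spec.
  destruct (resonant (fst p) (snd p)); ring.
Qed.

(* Each product is split by AM-GM as [b i b j <= (w i b i^2 / w j + w j b j^2 / w i) / 2];
   the two halves have the same sum because [rel] is symmetric. *)
Lemma schur_test {I} (T : list I) (rel : I -> I -> bool) (w b : I -> R) (C : R) :
  (forall i, 0 < w i) -> (forall i j, rel i j = rel j i) ->
  (forall i, In i T -> lsum T (fun j => if rel i j then / w j else 0) <= C) ->
  lsum (list_prod T T) (fun p => if rel (fst p) (snd p) then b (fst p) * b (snd p) else 0)
  <= C * lsum T (fun i => w i * b i ^ 2).
Proof.
  intros Hw Hsym HC.
  set (x := fun i j => if rel i j then w i * b i ^ 2 * / w j else 0).
  apply Rle_trans with (lsum (list_prod T T) (fun p => / 2 * (x (fst p) (snd p) + x (snd p) (fst p)))).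
  { apply lsum_le. intros [i j] _. unfold x. cbn [fst snd]. rewrite (Hsym j i).
    destruct (rel i j); [|lra].
    pose proof (Hw i). pose proof (Hw j).
    pose proof (pow2_ge_0 (w i * b i - w j * b j)).
    apply (Rmult_le_reg_r (2 * w i * w j)); [nra|].
    replace (/ 2 * (w i * b i ^ 2 * / w j + w j * b j ^ 2 * / w i) * (2 * w i * w j))
      with ((w i * b i) ^ 2 + (w j * b j) ^ 2) by (field; lra).
    nra. }
  rewrite lsum_scal, lsum_plus, !lsum_prod. cbn [fst snd].
  rewrite (lsum_comm T T (fun i j => x j i)).
  assert (Hx : lsum T (fun i => lsum T (fun j => x i j)) <= C * lsum T (fun i => w i * b i ^ 2)).
  { rewrite <- lsum_scal. apply lsum_le. intros i Hi. unfold x.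
    transitivity (w i * b i ^ 2 * lsum T (fun j => if rel i j then / w j else 0)).
    - rewrite <- lsum_scal. apply Req_le, lsum_ext. intros j _. destruct (rel i j); ring.
    - rewrite (Rmult_comm C). apply Rmult_le_compat_l; [|apply HC; auto].
      pose proof (Hw i). pose proof (pow2_ge_0 (b i)). nra. }
  lra.
Qed.

Definition weight (d : R) (k : Z) : R := Rpower (1 + IZR k ^ 2) d.

Definition tweight (d : R) (k : Z * Z * Z) : R :=
  weight d (fst (fst k)) * weight d (snd (fst k)) * weight d (snd k).

Definition tdisc (k : Z * Z * Z) : Z :=
  norm3 (fst (fst k) - snd (fst k)) (fst (fst k) + snd (fst k) - 2 * snd k).

Lemma tdisc_eq k : tdisc k = (6 * tsqsum k - 2 * tsum k ^ 2)%Z.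
Proof. unfold tdisc, norm3, tsqsum, tsum. ring. Qed.

Lemma tdisc_resonant k k' : resonant k k' = true -> tdisc k' = tdisc k.
Proof.
  unfold resonant. intros H. apply andb_prop in H as [H1 H2].
  apply Z.eqb_eq in H1. apply Z.eqb_eq in H2. rewrite !tdisc_eq, H1, H2. reflexivity.
Qed.

Lemma tweight_pos d k : 0 < tweight d k.
Proof. unfold tweight, weight. repeat apply Rmult_lt_0_compat; apply Rpower_pos. Qed.

(* [8 (1 + a^2) (1 + b^2) (1 + c^2) - (1 + tdisc k)] is 7 plus a sum of squares. *)
Lemma Rpower_tdisc_le d k : 0 <= d ->
  Rpower (1 + IZR (tdisc k)) d <= Rpower 8 d * tweight d k.
Proof.
  intros Hd. unfold tweight, weight, tdisc, norm3.
  rewrite !Z.pow_2_r, plus_IZR, !mult_IZR, !minus_IZR, !plus_IZR, mult_IZR.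
  set (x := IZR (fst (fst k))). set (y := IZR (snd (fst k))). set (z := IZR (snd k)).
  rewrite !Rpower_mult_distr by nra.
  apply Rle_Rpower_l; auto. split.
  { pose proof (Rle_0_sqr (x - y)). pose proof (Rle_0_sqr (x + y - 2 * z)). unfold Rsqr in *. lra. }
  assert (E : 8 * ((1 + x ^ 2) * (1 + y ^ 2) * (1 + z ^ 2)) -
              (1 + (3 * ((x - y) * (x - y)) + (x + y - 2 * z) * (x + y - 2 * z))) =
              7 + 2 * ((x + y) ^ 2 + (x + z) ^ 2 + (y + z) ^ 2) +
              8 * ((x * y) ^ 2 + (x * z) ^ 2 + (y * z) ^ 2 + (x * y * z) ^ 2)) by ring.
  pose proof (pow2_ge_0 (x + y)). pose proof (pow2_ge_0 (x + z)).
  pose proof (pow2_ge_0 (y + z)). pose proof (pow2_ge_0 (x * y)).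
  pose proof (pow2_ge_0 (x * z)). pose proof (pow2_ge_0 (y * z)).
  pose proof (pow2_ge_0 (x * y * z)). lra.
Qed.

Lemma length_reps_le_Rpower d : 0 < d -> exists C, 0 < C /\
  forall M, (0 <= M)%Z -> INR (length (reps M)) <= C * Rpower (1 + IZR M) d.
Proof.
  intros Hd. destruct (ndiv_le_Rpower (d / 3)) as [Cd [HCd Hdiv]]; [lra|].
  exists (14 * Cd ^ 3 + 1). split; [pose proof (pow_lt Cd 3 HCd); lra|].
  intros M HM. destruct (Z.eq_dec M 0) as [->|HM0].
  - change (length (reps 0)) with 1%nat. rewrite Rplus_0_r, Rpower_1_l.
    pose proof (pow_lt Cd 3 HCd). simpl; lra.
  - assert (HM1 : (1 <= M)%Z) by lia.
    pose proof (le_INR _ _ (length_reps_le M HM1)) as HL.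
    rewrite mult_INR, pow_INR in HL.
    pose proof (Hdiv M HM1) as HD. pose proof (pos_INR (ndiv M)).
    assert (Hpow : (Cd * Rpower (IZR M) (d / 3)) ^ 3 = Cd ^ 3 * Rpower (IZR M) d).
    { rewrite Rpow_mult_distr, <- (Rpower_pow 3 (Rpower (IZR M) (d / 3))), Rpower_mult
        by apply Rpower_pos.
      do 2 f_equal. simpl. field. }
    assert (HMd : Rpower (IZR M) d <= Rpower (1 + IZR M) d).
    { apply Rle_Rpower_l; [lra|]. apply IZR_le in HM1. lra. }
    pose proof (pow_incr _ _ 3 (conj (pos_INR (ndiv M)) HD)) as H3.
    rewrite Hpow in H3. pose proof (Rpower_pos (1 + IZR M) d). pose proof (pow_lt Cd 3 HCd).
    simpl INR in HL. nra.
Qed.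

Lemma length_resonant_class_le N k :
  (length (filter (resonant k) (triples N)) <= length (reps (tdisc k)))%nat.
Proof.
  apply (length_le_of_injective_in _ _
    (fun k' => (fst (fst k') - snd (fst k'), fst (fst k') + snd (fst k') - 2 * snd k')%Z)).
  - apply NoDup_filter. unfold triples. repeat apply NoDup_list_prod; apply NoDup_Zrange.
  - intros [[a1 a2] a3] [[b1 b2] b3] Ha Hb H.
    apply filter_In in Ha as [_ Ha]. apply filter_In in Hb as [_ Hb].
    unfold resonant in Ha, Hb. apply andb_prop in Ha as [Ha _]. apply andb_prop in Hb as [Hb _].
    apply Z.eqb_eq in Ha. apply Z.eqb_eq in Hb. apply pair_equal_spec in H as [H1 H2].
    unfold tsum in Ha, Hb. cbn [fst snd] in *.
    assert (a3 = b3) by lia. assert (a1 = b1) by lia. assert (a2 = b2) by lia. subst; auto.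
  - intros k' Hk'. apply filter_In in Hk' as [_ Hres].
    apply In_reps; [apply norm3_nonneg|]. now apply tdisc_resonant.
Qed.

Lemma sum_resonant_inv_tweight_le d : 0 < d -> exists C, 0 < C /\
  forall N k, lsum (triples N) (fun k' => if resonant k k' then / tweight d k' else 0) <= C.
Proof.
  intros Hd. destruct (length_reps_le_Rpower d Hd) as [Cr [HCr Hreps]].
  pose proof (Rpower_pos 8 d).
  exists (Rpower 8 d * Cr). split; [nra|]. intros N k.
  set (q := Rpower 8 d / Rpower (1 + IZR (tdisc k)) d).
  pose proof (Rpower_pos (1 + IZR (tdisc k)) d).
  apply Rle_trans with (lsum (triples N) (fun k' => if resonant k k' then q else 0)).
  { apply lsum_le. intros k' _. destruct (resonant k k') eqn:Hres; [|lra].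
    unfold q. rewrite <- (tdisc_resonant k k') by auto.
    pose proof (Rpower_tdisc_le d k' ltac:(lra)). pose proof (tweight_pos d k').
    pose proof (Rpower_pos (1 + IZR (tdisc k')) d).
    apply (Rmult_le_reg_r (tweight d k' * Rpower (1 + IZR (tdisc k')) d)); [nra|].
    field_simplify; lra. }
  rewrite lsum_indicator.
  apply Rle_trans with (q * INR (length (reps (tdisc k)))).
  { apply Rmult_le_compat_l; [unfold q; apply Rlt_le, Rdiv_lt_0_compat; auto|].
    apply le_INR, length_resonant_class_le. }
  pose proof (Hreps (tdisc k) (norm3_nonneg _ _)). unfold q.
  apply Rle_trans with (Rpower 8 d / Rpower (1 + IZR (tdisc k)) d *
                        (Cr * Rpower (1 + IZR (tdisc k)) d)).
  - apply Rmult_le_compat_l; auto. apply Rlt_le, Rdiv_lt_0_compat; auto.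
  - right. field. lra.
Qed.

Lemma modes_Permutation N :
  Permutation (modes N)
    (map Z.of_nat (seq 0 (S N)) ++ map (fun n => (- Z.of_nat (S n))%Z) (seq 0 N)).
Proof.
  apply NoDup_Permutation.
  - apply NoDup_Zrange.
  - apply NoDup_app.
    + apply NoDup_map_NoDup_ForallPairs; [|apply seq_NoDup]. intros x y _ _; lia.
    + apply NoDup_map_NoDup_ForallPairs; [|apply seq_NoDup]. intros x y _ _; lia.
    + intros a Ha Ha'. apply in_map_iff in Ha as [n [<- _]].
      apply in_map_iff in Ha' as [m [Hm _]]. lia.
  - intros x. unfold modes. rewrite In_Zrange, in_app_iff, !in_map_iff. split.
    + intros Hx. destruct (Z_le_gt_dec 0 x).
      * left. exists (Z.to_nat x). rewrite in_seq. lia.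
      * right. exists (Z.to_nat (- x - 1)). rewrite in_seq. lia.
    + intros [[n [<- Hn]]|[n [<- Hn]]]; apply in_seq in Hn; lia.
Qed.

Lemma hs_term_nonneg eps lam c k : 0 <= hs_term eps lam c k.
Proof. apply Rmult_le_pos; [left; apply Rpower_pos|apply pow2_ge_0]. Qed.

Lemma lsum_modes_hs_term_le eps lam c N : in_Hs eps lam c ->
  lsum (modes N) (hs_term eps lam c) <= Series (hs_pos eps lam c) + Series (hs_neg eps lam c).
Proof.
  intros [Hpos Hneg]. rewrite (lsum_Permutation _ _ _ (modes_Permutation N)).
  rewrite lsum_app, !lsum_map.
  apply Rplus_le_compat; apply lsum_le_Series; auto; intros; apply hs_term_nonneg.
Qed.

Lemma weight_le_japan eps lam k : 0 <= eps -> 1 <= lam ->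
  weight eps k <= Rpower lam (2 * eps) * Rpower (japan (freq lam k)) (2 * eps).
Proof.
  intros He Hl. unfold weight, japan, freq.
  assert (Hq : 0 < 1 + (IZR k / lam) ^ 2) by (pose proof (pow2_ge_0 (IZR k / lam)); lra).
  rewrite <- Rpower_sqrt, Rpower_mult by exact Hq.
  replace (/ 2 * (2 * eps)) with eps by field.
  replace (Rpower lam (2 * eps)) with (Rpower (lam ^ 2) eps).
  2: { rewrite <- Rpower_pow, Rpower_mult by lra. f_equal; simpl; ring. }
  rewrite Rpower_mult_distr by (try apply pow_lt; lra).
  apply Rle_Rpower_l; auto. split; [pose proof (pow2_ge_0 (IZR k)); lra|].
  replace (lam ^ 2 * (1 + (IZR k / lam) ^ 2)) with (lam ^ 2 + IZR k ^ 2) by (field; lra).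
  nra.
Qed.

Lemma lsum_weight_le_Hs eps lam c N : 0 <= eps -> 1 <= lam -> in_Hs eps lam c ->
  lsum (modes N) (fun k => weight eps k * Cmod (c k) ^ 2) <=
  Rpower lam (2 * eps) * (Series (hs_pos eps lam c) + Series (hs_neg eps lam c)).
Proof.
  intros He Hl Hs. eapply Rle_trans.
  2: { apply Rmult_le_compat_l; [left; apply Rpower_pos|].
       apply (lsum_modes_hs_term_le _ _ _ N Hs). }
  rewrite <- lsum_scal. apply lsum_le. intros k _. unfold hs_term. rewrite <- Rmult_assoc.
  apply Rmult_le_compat_r; [apply pow2_ge_0|]. now apply weight_le_japan.
Qed.

Lemma lsum_tweight_tprod d c N :
  lsum (triples N) (fun k => tweight d k * Cmod (tprod c k) ^ 2) =
  (lsum (modes N) (fun k => weight d k * Cmod (c k) ^ 2)) ^ 3.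
Proof.
  set (g := fun k => weight d k * Cmod (c k) ^ 2).
  replace (lsum (modes N) g ^ 3) with (lsum (modes N) g * lsum (modes N) g * lsum (modes N) g)
    by ring.
  rewrite !lsum_mult. apply lsum_ext. intros [[k1 k2] k3] _.
  unfold tweight, tprod, g. cbn [fst snd]. rewrite !Cmod_mult. ring.
Qed.

Lemma resonant_sym k k' : resonant k k' = resonant k' k.
Proof. unfold resonant. now rewrite Z.eqb_sym, (Z.eqb_sym (tsqsum k)). Qed.

Lemma L6_integral_le lam c N d C : 0 < lam ->
  (forall k, lsum (triples N) (fun k' => if resonant k k' then / tweight d k' else 0) <= C) ->
  RInt (fun t => RInt (fun x => Cmod (lin_sol_trunc lam c N t x) ^ 6) 0 (2 * PI * lam))
    0 (2 * PI * lam ^ 2) <=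
  C / (2 * PI) * (lsum (modes N) (fun k => weight d k * Cmod (c k) ^ 2) / (2 * PI * lam)) ^ 3.
Proof.
  intros Hl HC. pose proof PI_RGT_0.
  rewrite RInt_RInt_Cmod_lin_sol_trunc_pow6 by auto.
  replace (C / (2 * PI) * (lsum (modes N) (fun k => weight d k * Cmod (c k) ^ 2)
                           / (2 * PI * lam)) ^ 3)
    with (2 * PI * lam * (2 * PI * lam ^ 2) * (/ (2 * PI * lam)) ^ 6 *
          (C * lsum (modes N) (fun k => weight d k * Cmod (c k) ^ 2) ^ 3))
    by (field; lra).
  apply Rmult_le_compat_l.
  { pose proof (pow_lt lam 2 Hl).
    assert (0 < 2 * PI * lam) by nra. assert (0 < 2 * PI * lam ^ 2) by nra.
    apply Rmult_le_pos; [nra|]. apply pow_le, Rlt_le, Rinv_0_lt_compat; auto. }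
  rewrite <- lsum_tweight_tprod.
  eapply Rle_trans; [|apply (schur_test _ resonant (tweight d) (fun k => Cmod (tprod c k)))].
  - apply lsum_le. intros p _. destruct (resonant (fst p) (snd p)); [|lra].
    apply Cdot_le_Cmod_mul.
  - apply tweight_pos.
  - apply resonant_sym.
  - intros k _. apply HC.
Qed.

Lemma root6_le a A y : 0 < A -> 0 <= y -> a <= A * y ^ 6 -> root6 a <= Rpower A (/ 6) * y.
Proof.
  intros HA Hy Ha. unfold root6. destruct (Rle_dec a 0) as [Ha0|Ha0].
  - apply Rmult_le_pos; [left; apply Rpower_pos|auto].
  - assert (Hy0 : 0 < y).
    { destruct Hy as [|<-]; auto. rewrite pow_i, Rmult_0_r in Ha by lia. lra. }
    eapply Rle_trans; [apply Rle_Rpower_l; [left; apply Rinv_0_lt_compat; lra|split; [lra|exact Ha]]|].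
    rewrite <- Rpower_mult_distr by (auto; apply pow_lt; auto).
    rewrite <- Rpower_pow, Rpower_mult by auto.
    replace (INR 6 * / 6) with 1 by (simpl; field). rewrite Rpower_1 by auto. lra.
Qed.

Lemma Series_hs_nonneg eps lam c : in_Hs eps lam c ->
  0 <= Series (hs_pos eps lam c) + Series (hs_neg eps lam c).
Proof.
  intros Hs. eapply Rle_trans; [|apply (lsum_modes_hs_term_le _ _ _ 0 Hs)].
  apply lsum_nonneg. intros; apply hs_term_nonneg.
Qed.

Lemma Hs_norm_sq eps lam c : 0 < lam -> in_Hs eps lam c ->
  Hs_norm eps lam c ^ 2 = (Series (hs_pos eps lam c) + Series (hs_neg eps lam c)) / (2 * PI * lam).
Proof.
  intros Hl Hs. unfold Hs_norm. rewrite pow2_sqrt; [unfold Rdiv; ring|].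
  apply Rmult_le_pos; [|apply Series_hs_nonneg; auto].
  apply Rlt_le, Rinv_0_lt_compat. pose proof PI_RGT_0. nra.
Qed.

Lemma lsum_weight_le_Hs_norm eps lam c N : 0 <= eps -> 1 <= lam -> in_Hs eps lam c ->
  lsum (modes N) (fun k => weight eps k * Cmod (c k) ^ 2) / (2 * PI * lam) <=
  Rpower lam (2 * eps) * Hs_norm eps lam c ^ 2.
Proof.
  intros He Hl Hs. rewrite Hs_norm_sq by (auto; lra). unfold Rdiv.
  rewrite <- Rmult_assoc. apply Rmult_le_compat_r.
  - apply Rlt_le, Rinv_0_lt_compat. pose proof PI_RGT_0. nra.
  - apply lsum_weight_le_Hs; auto.
Qed.

Theorem proposition3p5 :
  forall eps : R, 0 < eps ->
  exists C0 : R, 0 < C0 /\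
    forall lam : R, 1 <= lam ->
    forall c : Z -> C, in_Hs eps lam c ->
    forall N : nat,
      L6_norm lam (lin_sol_trunc lam c N) <= C0 * Rpower lam eps * Hs_norm eps lam c.
Proof.
  intros eps Heps.
  destruct (sum_resonant_inv_tweight_le eps Heps) as [C [HC Hres]].
  pose proof PI_RGT_0 as Hpi.
  exists (Rpower (C / (2 * PI)) (/ 6)). split; [apply Rpower_pos|].
  intros lam Hlam c Hs N. rewrite Rmult_assoc.
  apply root6_le; [apply Rdiv_lt_0_compat; lra| |].
  { apply Rmult_le_pos; [left; apply Rpower_pos|apply sqrt_pos]. }
  eapply Rle_trans; [apply L6_integral_le; [lra|apply (Hres N)]|].
  apply Rmult_le_compat_l; [apply Rlt_le, Rdiv_lt_0_compat; lra|].
  replace ((Rpower lam eps * Hs_norm eps lam c) ^ 6)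
    with ((Rpower lam (2 * eps) * Hs_norm eps lam c ^ 2) ^ 3)
    by (replace (2 * eps) with (eps + eps) by ring; rewrite Rpower_plus; ring).
  apply pow_incr. split; [|apply lsum_weight_le_Hs_norm; auto; lra].
  apply Rdiv_le_0_compat; [|nra].
  apply lsum_nonneg; intros; apply Rmult_le_pos; [left; apply Rpower_pos|apply pow2_ge_0].
Qed.
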